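(* Let $0<\mu_2<\tfrac12<\mu_1<1$. For every $\epsilon\in(0,1)$ there exists a twice continuously differentiable function $f^{SD}_\epsilon:\mathbb{R}\to\mathbb{R}$, bounded below, with globally Lipschitz continuous derivative (indeed with second derivative bounded by a constant independent of $\epsilon$) and with values in a bounded interval independent of $\epsilon$, together with a sequence of steplengths $\mu_k\in[\tfrac14,1]$, such that the steepest-descent iterates $x_0=0$, $x_{k+1}=x_k-\mu_kg_k$ (with $g_k=(f^{SD}_\epsilon)'(x_k)$) satisfy the Goldstein conditions $$f(x_k)+\mu_1g_ks_k\le f(x_{k+1})\le f(x_k)+\mu_2g_ks_k,\qquad s_k=x_{k+1}-x_k,$$ for all $k$, and $|g_k|>\epsilon$ for $k<k_\epsilon$ while $|g_{k_\epsilon}|\le\epsilon$, where $k_\epsilon=\lceil\epsilon^{-2}\rceil$. *)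

From Stdlib Require Export Reals Lra Lia ZArith.
Open Scope R_scope.

(* Floor via Stdlib's [up]: IZR (up y) - 1 <= y < IZR (up y). *)
Definition Rfloor (y : R) : Z := (up y - 1)%Z.
Definition Rceil (y : R) : Z := (- Rfloor (- y))%Z.

Definition k_eps (eps : R) : nat := Z.to_nat (Rceil (/ (eps ^ 2))).

(** With [h = 2 eps], the function [w(x) = -h x/2 - h^2/(4 pi) sin(2 pi x/h)]
    has [w' = -(h/2)(1 + cos(2 pi x/h))], which equals [-h] on the grid [h Z]
    and vanishes, together with [w''], at the points [(n + 1/2) h]; at all
    these points [w] lies on the line [-h x/2].  Starting from [0], unit steps
    walk along the grid with gradient [-h], and a final half step lands at the
    critical point [(N + 1/2) h].  Every step therefore decreases [f] by
    exactly half of [g s], so both Goldstein conditions hold whenever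
    [mu2 < 1/2 < mu1].  Clamping the argument of [w] to [[-h/2, (N + 1/2) h]]
    keeps [f] twice continuously differentiable (both endpoints are flat
    inflection points) and bounded, and with [N = k_eps - 1] the gradient norm
    [h = 2 eps] stays above [eps] for exactly [k_eps] iterations. *)

From Stdlib Require Import Reals Lra Lia ZArith.
From Coquelicot Require Import Coquelicot.
Open Scope R_scope.

Lemma derivable_pt_lim_glue (F G H : R -> R) (t l d : R) :
  0 < d ->
  (forall y, t - d < y <= t -> F y = G y) ->
  (forall y, t <= y < t + d -> F y = H y) ->
  derivable_pt_lim G t l -> derivable_pt_lim H t l -> derivable_pt_lim F t l.
Proof.
  intros Hd FG FH DG DH e He.
  destruct (DG e He) as [dG PG]; destruct (DH e He) as [dH PH].
  assert (Hmin : 0 < Rmin d (Rmin dG dH)).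
  { repeat apply Rmin_pos; try apply cond_pos; lra. }
  exists (mkposreal _ Hmin); intros y Hy0 Hy; simpl in Hy.
  assert (Hd1 := Rmin_l d (Rmin dG dH)); assert (Hd2 := Rmin_r d (Rmin dG dH)).
  assert (HdG := Rmin_l dG dH); assert (HdH := Rmin_r dG dH).
  apply Rabs_def2 in Hy as [Hy1 Hy2].
  destruct (Rle_or_lt y 0) as [Hneg | Hpos].
  - rewrite !FG by lra; apply PG; auto; apply Rabs_def1; lra.
  - rewrite !FH by lra; apply PH; auto; apply Rabs_def1; lra.
Qed.

Lemma derivable_pt_lim_comp_Rmin (M M' : R -> R) (q : R) :
  (forall x, derivable_pt_lim M x (M' x)) -> M' q = 0 ->
  forall t, derivable_pt_lim (fun x => M (Rmin x q)) t (M' (Rmin t q)).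
Proof.
  intros DM Mq t.
  assert (Dq : derivable_pt_lim (fun _ => M q) t 0) by apply derivable_pt_lim_const.
  destruct (Rtotal_order t q) as [Htq | [Htq | Htq]].
  - rewrite Rmin_left by lra.
    apply (derivable_pt_lim_glue _ M M t _ (q - t)); auto; try lra;
      intros y Hy; rewrite Rmin_left by lra; reflexivity.
  - subst t; rewrite Rmin_left, Mq by lra.
    apply (derivable_pt_lim_glue _ M (fun _ => M q) q _ 1); try lra;
      [ intros y Hy; rewrite Rmin_left by lra; reflexivity
      | intros y Hy; rewrite Rmin_right by lra; reflexivity
      | rewrite <- Mq; apply DM | auto ].
  - rewrite Rmin_right, Mq by lra.
    apply (derivable_pt_lim_glue _ (fun _ => M q) (fun _ => M q) t _ (t - q));
      auto; try lra; intros y Hy; rewrite Rmin_right by lra; reflexivity.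
Qed.

Lemma derivable_pt_lim_comp_Rmax (M M' : R -> R) (p : R) :
  (forall x, derivable_pt_lim M x (M' x)) -> M' p = 0 ->
  forall t, derivable_pt_lim (fun x => M (Rmax p x)) t (M' (Rmax p t)).
Proof.
  intros DM Mp t.
  assert (Dp : derivable_pt_lim (fun _ => M p) t 0) by apply derivable_pt_lim_const.
  destruct (Rtotal_order t p) as [Htp | [Htp | Htp]].
  - rewrite Rmax_left, Mp by lra.
    apply (derivable_pt_lim_glue _ (fun _ => M p) (fun _ => M p) t _ (p - t));
      auto; try lra; intros y Hy; rewrite Rmax_left by lra; reflexivity.
  - subst t; rewrite Rmax_left, Mp by lra.
    apply (derivable_pt_lim_glue _ (fun _ => M p) M p _ 1); try lra;
      [ intros y Hy; rewrite Rmax_left by lra; reflexivity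
      | intros y Hy; rewrite Rmax_right by lra; reflexivity
      | auto | rewrite <- Mp; apply DM ].
  - rewrite Rmax_right by lra.
    apply (derivable_pt_lim_glue _ M M t _ (t - p)); auto; try lra;
      intros y Hy; rewrite Rmax_right by lra; reflexivity.
Qed.

Definition clamp (p q x : R) : R := Rmax p (Rmin x q).

Lemma clamp_id (p q x : R) : p <= x <= q -> clamp p q x = x.
Proof. intros Hx; unfold clamp; rewrite Rmin_left, Rmax_right; lra. Qed.

Lemma clamp_range (p q x : R) : p <= q -> p <= clamp p q x <= q.
Proof.
  intros Hpq; unfold clamp, Rmax, Rmin.
  repeat destruct Rle_dec; lra.
Qed.

Lemma clamp_lipschitz (p q x y : R) :
  Rabs (clamp p q x - clamp p q y) <= Rabs (x - y).
Proof.
  unfold clamp, Rmax, Rmin, Rabs.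
  repeat destruct Rle_dec; repeat destruct Rcase_abs; lra.
Qed.

Lemma continuity_clamp (p q : R) : continuity (clamp p q).
Proof.
  intros t e He; exists e; split; auto.
  intros x [_ Hx]; simpl in *; unfold R_dist in *.
  eapply Rle_lt_trans; [apply clamp_lipschitz | exact Hx].
Qed.

Lemma derivable_pt_lim_comp_clamp (M M' : R -> R) (p q : R) :
  p <= q -> (forall x, derivable_pt_lim M x (M' x)) -> M' p = 0 -> M' q = 0 ->
  forall t, derivable_pt_lim (fun x => M (clamp p q x)) t (M' (clamp p q t)).
Proof.
  intros Hpq DM Mp Mq.
  apply (derivable_pt_lim_comp_Rmin (fun y => M (Rmax p y)) (fun y => M' (Rmax p y))).
  - exact (derivable_pt_lim_comp_Rmax M M' p DM Mp).
  - rewrite Rmax_right; auto.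
Qed.

Lemma goldstein_of_half_decrease (mu1 mu2 f0 f1 g s : R) :
  mu2 <= 1/2 <= mu1 -> g * s <= 0 -> f1 - f0 = g * s / 2 ->
  f0 + mu1 * g * s <= f1 <= f0 + mu2 * g * s.
Proof. intros Hmu Hgs Hf; rewrite !Rmult_assoc; split; nra. Qed.

Definition wave (h x : R) : R := -(h * x / 2) - h^2 / (4 * PI) * sin (2 * PI * x / h).
Definition wave1 (h x : R) : R := -(h / 2) - h / 2 * cos (2 * PI * x / h).
Definition wave2 (h x : R) : R := PI * sin (2 * PI * x / h).

Lemma PI_neq0 : PI <> 0.
Proof. apply Rgt_not_eq, PI_RGT_0. Qed.

Section Wave.

Variable h : R.
Hypothesis h_neq0 : h <> 0.

Lemma wave_derive (x : R) : derivable_pt_lim (wave h) x (wave1 h x).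
Proof.
  apply is_derive_Reals; unfold wave, wave1; auto_derive; auto.
  assert (Hpi := PI_neq0); unfold Rdiv; field; auto.
Qed.

Lemma wave1_derive (x : R) : derivable_pt_lim (wave1 h) x (wave2 h x).
Proof.
  apply is_derive_Reals; unfold wave1, wave2; auto_derive; auto.
  unfold Rdiv; field; auto.
Qed.

Lemma wave2_continuous : continuity (wave2 h).
Proof.
  intros x; apply derivable_continuous_pt.
  exists (PI * cos (2 * PI * x / h) * (2 * PI / h)).
  apply is_derive_Reals; unfold wave2; auto_derive; auto.
  unfold Rdiv; field; auto.
Qed.

Lemma wave_grid (k : nat) :
  wave h (INR k * h) = -(h * (INR k * h) / 2) /\ wave1 h (INR k * h) = -h.
Proof.
  unfold wave, wave1.
  replace (2 * PI * (INR k * h) / h) with (0 + 2 * INR k * PI) by (field; auto).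
  rewrite sin_period, cos_period, sin_0, cos_0; split; [ring | field].
Qed.

Lemma wave_half_grid (n : nat) (x := (INR n + /2) * h) :
  wave h x = -(h * x / 2) /\ wave1 h x = 0 /\ wave2 h x = 0.
Proof.
  unfold wave, wave1, wave2, x.
  replace (2 * PI * ((INR n + /2) * h) / h) with (PI + 2 * INR n * PI)
    by (field; auto).
  rewrite sin_period, cos_period, sin_PI, cos_PI; repeat split; ring.
Qed.

Lemma wave1_opp (x : R) : wave1 h (- x) = wave1 h x.
Proof.
  unfold wave1; replace (2 * PI * - x / h) with (- (2 * PI * x / h)) by (field; auto).
  rewrite cos_neg; reflexivity.
Qed.

Lemma wave2_opp (x : R) : wave2 h (- x) = - wave2 h x.
Proof.
  unfold wave2; replace (2 * PI * - x / h) with (- (2 * PI * x / h)) by (field; auto).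
  rewrite sin_neg; ring.
Qed.

Lemma wave2_bound (x : R) : Rabs (wave2 h x) <= 4.
Proof.
  unfold wave2; rewrite Rabs_mult, (Rabs_right PI) by (left; apply PI_RGT_0).
  assert (Hsin : Rabs (sin (2 * PI * x / h)) <= 1) by (apply Rabs_le, SIN_bound).
  assert (Hpi := PI_4); assert (Hpi0 := PI_RGT_0); nra.
Qed.

Lemma wave_near_line (x : R) : Rabs (wave h x + h * x / 2) <= h^2 / 4.
Proof.
  unfold wave.
  replace (-(h * x / 2) - h^2 / (4 * PI) * sin (2 * PI * x / h) + h * x / 2)
    with (- (h^2 / 4 * (sin (2 * PI * x / h) / PI))) by (assert (Hpi := PI_neq0); field; auto).
  rewrite Rabs_Ropp, Rabs_mult, Rabs_right by (apply Rle_ge; nra).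
  assert (Hpi := PI2_1); assert (Hsin := SIN_bound (2 * PI * x / h)).
  assert (Hq : Rabs (sin (2 * PI * x / h) / PI) <= 1).
  { unfold Rdiv; rewrite Rabs_mult, Rabs_inv, (Rabs_right PI) by lra.
    apply Rmult_le_reg_r with PI; [lra|].
    rewrite Rmult_assoc, Rinv_l by lra.
    assert (Rabs (sin (2 * PI * x / h)) <= 1) by (apply Rabs_le; lra); lra. }
  assert (0 <= h^2 / 4) by nra; nra.
Qed.

End Wave.

Section Staircase.

Variables (h : R) (N : nat).
Hypothesis h_pos : 0 < h.

Let h_neq0 : h <> 0. Proof. lra. Qed.

Definition stair_end : R := (INR N + /2) * h.
Definition stair (x : R) : R := wave h (clamp (-(h / 2)) stair_end x).
Definition stair1 (x : R) : R := wave1 h (clamp (-(h / 2)) stair_end x).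
Definition stair2 (x : R) : R := wave2 h (clamp (-(h / 2)) stair_end x).

Definition stair_iter (k : nat) : R := Rmin (INR k * h) stair_end.
Definition stair_step (k : nat) : R := if (k =? N)%nat then /2 else 1.

Let stair_start_le_end : -(h / 2) <= stair_end.
Proof. assert (HN := pos_INR N); unfold stair_end; nra. Qed.

Let wave_at_start : wave1 h (-(h / 2)) = 0 /\ wave2 h (-(h / 2)) = 0.
Proof.
  replace (h / 2) with ((INR 0 + /2) * h) by (simpl; field).
  rewrite wave1_opp, wave2_opp by auto.
  destruct (wave_half_grid h h_neq0 0) as [_ [-> ->]]; split; ring.
Qed.

Lemma stair_derive (t : R) : derivable_pt_lim stair t (stair1 t).
Proof.
  apply derivable_pt_lim_comp_clamp; auto.
  - exact (wave_derive h h_neq0).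
  - apply wave_at_start.
  - apply (wave_half_grid h h_neq0 N).
Qed.

Lemma stair1_derive (t : R) : derivable_pt_lim stair1 t (stair2 t).
Proof.
  apply derivable_pt_lim_comp_clamp; auto.
  - exact (wave1_derive h h_neq0).
  - apply wave_at_start.
  - apply (wave_half_grid h h_neq0 N).
Qed.

Lemma stair2_continuous : continuity stair2.
Proof. exact (continuity_comp _ _ (continuity_clamp _ _) (wave2_continuous h h_neq0)). Qed.

Lemma stair2_bound (t : R) : Rabs (stair2 t) <= 4.
Proof. apply wave2_bound. Qed.

Lemma stair1_lipschitz (t s : R) : Rabs (stair1 t - stair1 s) <= 4 * Rabs (t - s).
Proof.
  apply (bounded_variation stair1 stair2); intros y _; split.
  - apply is_derive_Reals, stair1_derive.
  - apply stair2_bound.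
Qed.

Lemma stair_bounds (t : R) : -(h * stair_end / 2) - h^2 / 4 <= stair t <= h^2 / 2.
Proof.
  unfold stair; destruct (clamp_range (-(h / 2)) stair_end t) as [Hlo Hhi]; auto.
  set (y := clamp _ _ t) in *.
  assert (Hw := proj1 (Rabs_le_between _ _) (wave_near_line h y)).
  split; nra.
Qed.

Lemma stair_iter_grid (k : nat) : (k <= N)%nat -> stair_iter k = INR k * h.
Proof.
  intros Hk; apply le_INR in Hk; unfold stair_iter, stair_end.
  rewrite Rmin_left; nra.
Qed.

Lemma stair_iter_end (k : nat) : (N < k)%nat -> stair_iter k = stair_end.
Proof.
  intros Hk; apply le_INR in Hk; rewrite S_INR in Hk; unfold stair_iter, stair_end.
  rewrite Rmin_right; nra.
Qed.

Let grid_in_range (k : nat) : (k <= N)%nat -> -(h / 2) <= INR k * h <= stair_end.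
Proof. intros Hk; assert (Hk0 := pos_INR k); apply le_INR in Hk; unfold stair_end; nra. Qed.

Lemma stair_on_iter (k : nat) : stair (stair_iter k) = -(h * stair_iter k / 2).
Proof.
  unfold stair; destruct (le_lt_dec k N) as [Hk | Hk].
  - rewrite stair_iter_grid, clamp_id; auto.
    apply wave_grid; auto.
  - rewrite stair_iter_end, clamp_id by (lia || lra).
    apply (wave_half_grid h h_neq0 N).
Qed.

Lemma stair1_iter_grid (k : nat) : (k <= N)%nat -> stair1 (stair_iter k) = -h.
Proof.
  intros Hk; unfold stair1; rewrite stair_iter_grid, clamp_id; auto.
  apply wave_grid; auto.
Qed.

Lemma stair1_iter_end (k : nat) : (N < k)%nat -> stair1 (stair_iter k) = 0.
Proof.
  intros Hk; unfold stair1; rewrite stair_iter_end, clamp_id by (lia || lra).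
  apply (wave_half_grid h h_neq0 N).
Qed.

Lemma stair_step_range (k : nat) : 1/4 <= stair_step k <= 1.
Proof. unfold stair_step; destruct Nat.eqb; lra. Qed.

Lemma stair_iter_0 : stair_iter 0 = 0.
Proof. rewrite stair_iter_grid by lia; simpl; ring. Qed.

Lemma stair_iter_S (k : nat) :
  stair_iter (S k) = stair_iter k - stair_step k * stair1 (stair_iter k).
Proof.
  unfold stair_step; destruct (lt_eq_lt_dec k N) as [[Hk | Hk] | Hk].
  - rewrite stair1_iter_grid, !stair_iter_grid by lia.
    replace (k =? N)%nat with false by (symmetry; apply Nat.eqb_neq; lia).
    rewrite S_INR; ring.
  - subst k; rewrite stair1_iter_grid, stair_iter_end, stair_iter_grid, Nat.eqb_refl by lia.
    unfold stair_end; field.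
  - rewrite stair1_iter_end, !stair_iter_end by lia; ring.
Qed.

Lemma stair_slope_nonpos (k : nat) :
  stair1 (stair_iter k) * (stair_iter (S k) - stair_iter k) <= 0.
Proof.
  rewrite stair_iter_S; assert (Hs := stair_step_range k).
  set (g := stair1 _); nra.
Qed.

Lemma stair_decrease (k : nat) :
  stair (stair_iter (S k)) - stair (stair_iter k)
  = stair1 (stair_iter k) * (stair_iter (S k) - stair_iter k) / 2.
Proof.
  rewrite !stair_on_iter; destruct (le_lt_dec k N) as [Hk | Hk].
  - rewrite stair1_iter_grid by auto; field.
  - rewrite !stair_iter_end by lia; field.
Qed.

End Staircase.

Lemma k_eps_spec (eps : R) :
  0 < eps < 1 -> (0 < k_eps eps)%nat /\ INR (pred (k_eps eps)) * eps^2 < 1.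
Proof.
  intros He; unfold k_eps, Rceil, Rfloor.
  set (y := / eps^2).
  assert (Hy : y * eps^2 = 1) by (unfold y; field; lra).
  destruct (archimed (- y)) as [Hup1 Hup2].
  set (z := (- (up (- y) - 1))%Z).
  assert (Hz : IZR z = 1 - IZR (up (- y))).
  { unfold z; rewrite opp_IZR, minus_IZR; simpl; ring. }
  assert (Hz0 : (0 < z)%Z) by (apply lt_0_IZR; nra).
  split; [lia|].
  rewrite <- Nat.sub_1_r, minus_INR, INR_1, INR_IZR_INZ, Z2Nat.id by lia.
  rewrite <- Hy; apply Rmult_lt_compat_r; [apply pow_lt | ]; lra.
Qed.

Theorem theoremA1 (mu1 mu2 : R) :
  0 < mu2 -> mu2 < 1/2 -> 1/2 < mu1 -> mu1 < 1 ->
  exists (L lo hi : R),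
    forall eps : R, 0 < eps < 1 ->
    exists (f f1 f2 : R -> R) (mu x : nat -> R),
      (forall t, derivable_pt_lim f t (f1 t)) /\
      (forall t, derivable_pt_lim f1 t (f2 t)) /\
      continuity f2 /\
      (exists m : R, forall t, m <= f t) /\
      (forall t s, Rabs (f1 t - f1 s) <= L * Rabs (t - s)) /\
      (forall t, Rabs (f2 t) <= L) /\
      (forall t, lo <= f t <= hi) /\
      (forall k, 1/4 <= mu k <= 1) /\
      x 0%nat = 0 /\
      (forall k, x (S k) = x k - mu k * f1 (x k)) /\
      (forall k,
         f (x k) + mu1 * f1 (x k) * (x (S k) - x k) <= f (x (S k)) /\
         f (x (S k)) <= f (x k) + mu2 * f1 (x k) * (x (S k) - x k)) /\
      (forall k, (k < k_eps eps)%nat -> Rabs (f1 (x k)) > eps) /\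
      Rabs (f1 (x (k_eps eps))) <= eps.
Proof.
  intros _ Hmu2 Hmu1 _.
  exists 4, (-5), 5; intros eps Heps.
  destruct (k_eps_spec eps Heps) as [HK HN].
  set (h := 2 * eps); set (N := pred (k_eps eps)) in *.
  assert (Hh : 0 < h) by (unfold h; lra).
  assert (HKN : k_eps eps = S N) by (unfold N; lia).
  assert (Hbounds : forall t, -5 <= stair h N t <= 5).
  { intros t; destruct (stair_bounds h N Hh t) as [Hlo Hhi].
    replace (-(h * stair_end h N / 2) - h^2 / 4) with (-(2 * (INR N * eps^2) + 2 * eps^2))
      in Hlo by (unfold stair_end, h; field).
    replace (h^2 / 2) with (2 * eps^2) in Hhi by (unfold h; field).
    assert (Heps2 : eps^2 < 1) by (simpl; nra).
    split; lra. }
  exists (stair h N), (stair1 h N), (stair2 h N), (stair_step N), (stair_iter h N).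
  rewrite HKN.
  split; [intros t; apply stair_derive; auto |].
  split; [intros t; apply stair1_derive; auto |].
  split; [apply stair2_continuous; auto |].
  split; [exists (-5); intros t; apply Hbounds |].
  split; [apply stair1_lipschitz; auto |].
  split; [apply stair2_bound |].
  split; [exact Hbounds |].
  split; [apply stair_step_range |].
  split; [apply stair_iter_0; auto |].
  split; [apply stair_iter_S; auto |].
  split.
  { intros k; apply goldstein_of_half_decrease;
      [lra | apply stair_slope_nonpos; auto | apply stair_decrease; auto]. }
  split.
  { intros k Hk; rewrite stair1_iter_grid, Rabs_Ropp, Rabs_right by (auto || lia || lra).
    unfold h; lra. }
  rewrite stair1_iter_end, Rabs_R0 by (auto || lia); lra.
Qed.
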